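(* Let $d=1$. Then $\Pi^{0}=\mathbb{Q}$. That is, a real number $x$ has the property that for every non-increasing $\psi:\mathbb{N}\to\mathbb{R}_{\ge0}$ with $\sum_n\psi(n)=\infty$ there are infinitely many $n\in\mathbb{N}$ with $\|nx\|<\psi(n)$, if and only if $x\in\mathbb{Q}$.
   Context: For $t\in\mathbb{R}$, $\|t\|$ is the distance from $t$ to $\mathbb{Z}$. Write $\mathbb{N}=\{1,2,\dots\}$. $\Pi^0=\{x\in\mathbb{R}:(x,0)\in\Pi\}$, where $\Pi$ is the set of $(x,y)\in\mathbb{R}^2$ such that for every non-increasing $\psi:\mathbb{N}\to\mathbb{R}_{\ge0}$ with $\sum_n\psi(n)=\infty$, one has $\|nx+y\|<\psi(n)$ for infinitely many $n\in\mathbb{N}$. *)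

From Stdlib Require Import Reals Lra Lia ZArith.
Open Scope R_scope.

Definition distZ (t : R) : R :=
  Rmin (t - IZR (Int_part t)) (IZR (Int_part t) + 1 - t).

(* psi : N -> R_{>=0}; we model N = {1,2,...} by using psi on positive nat,
   psi n meaningful for n >= 1 (value at 0 is ignored). *)
Definition nonincreasing_pos (psi : nat -> R) : Prop :=
  forall m n : nat, (1 <= m)%nat -> (m <= n)%nat -> psi n <= psi m.

Definition nonneg_pos (psi : nat -> R) : Prop :=
  forall n : nat, (1 <= n)%nat -> 0 <= psi n.

Definition sum_diverges (psi : nat -> R) : Prop :=
  cv_infty (fun N => sum_f_R0 (fun k => psi (S k)) N).

Definition infinitely_many (P : nat -> Prop) : Prop :=
  forall N : nat, exists n : nat, (N <= n)%nat /\ (1 <= n)%nat /\ P n.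

Definition in_Pi (x y : R) : Prop :=
  forall psi : nat -> R,
    nonneg_pos psi -> nonincreasing_pos psi -> sum_diverges psi ->
    infinitely_many (fun n => distZ (INR n * x + y) < psi n).

Definition in_Pi0 (x : R) : Prop := in_Pi x 0.

Definition is_rational (x : R) : Prop :=
  exists (p q : Z), q <> 0%Z /\ x = IZR p / IZR q.

From Stdlib Require Import Reals Lra Lia ZArith Classical.
Open Scope R_scope.

(* If x = p/q then ||n x|| = 0 along the multiples of q, while a nonincreasing
   psi with divergent sum never vanishes.  If x is irrational, take
   psi(n) = min_{1 <= m <= n} ||m x||: trivially ||n x|| >= psi(n), and psi is
   nonincreasing and positive.  Its sum diverges because a record
   ||b x|| < ||a x|| with a <= b forces ||a x|| > 1/(2b); hence psi(n) persists
   up to 1/(2 psi(n)), and every tail of the series contains a block of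
   sum >= 1/8. *)

Lemma distZ_Rabs t : exists p : Z, distZ t = Rabs (t - IZR p).
Proof.
  destruct (base_Int_part t) as [Hlo Hhi]. unfold distZ.
  apply Rmin_case.
  - exists (Int_part t). rewrite Rabs_right; lra.
  - exists (Int_part t + 1)%Z. rewrite plus_IZR, Rabs_left1; lra.
Qed.

Lemma distZ_ge0 t : 0 <= distZ t.
Proof. destruct (distZ_Rabs t) as [p ->]. apply Rabs_pos. Qed.

Lemma distZ_IZR z : distZ (IZR z) = 0.
Proof.
  unfold distZ. rewrite <- (Int_part_spec (IZR z) z) by lra.
  rewrite Rmin_left; lra.
Qed.

Lemma distZ_eq0 t : distZ t = 0 -> exists z, t = IZR z.
Proof.
  destruct (distZ_Rabs t) as [p ->]. intros H. exists p.
  destruct (Req_dec (t - IZR p) 0) as [Heq | Hne]; [lra |].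
  destruct (Rabs_no_R0 _ Hne H).
Qed.

Lemma Rabs_IZR_ge1 (z : Z) : z <> 0%Z -> 1 <= Rabs (IZR z).
Proof. intros Hz. rewrite <- abs_IZR. apply IZR_le. lia. Qed.

Lemma integer_combination_gap (A B u v : R) (k : Z) :
  0 < A <= B -> Rabs v < Rabs u -> IZR k = A * v - B * u ->
  1 < 2 * B * Rabs u.
Proof.
  intros [HA HAB] Hvu Hk.
  assert (Hk_le : Rabs (IZR k) <= A * Rabs v + B * Rabs u).
  { pose proof (Rabs_triang (A * v) (- (B * u))) as T.
    rewrite Rabs_Ropp, !Rabs_mult, (Rabs_pos_eq A), (Rabs_pos_eq B) in T by lra.
    rewrite Hk. exact T. }
  assert (Hk_ge : B * Rabs u <= A * Rabs v + Rabs (IZR k)).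
  { pose proof (Rabs_triang (A * v) (- IZR k)) as T.
    replace (A * v + - IZR k) with (B * u) in T by lra.
    rewrite Rabs_Ropp, !Rabs_mult, (Rabs_pos_eq A), (Rabs_pos_eq B) in T by lra.
    exact T. }
  assert (Hdom : A * Rabs v < B * Rabs u).
  { pose proof (Rabs_pos v). nra. }
  destruct (Z.eq_dec k 0) as [-> | Hk0].
  - rewrite Rabs_R0 in Hk_ge. lra.
  - pose proof (Rabs_IZR_ge1 k Hk0). lra.
Qed.

Lemma distZ_mul_record_bound (a b : nat) (x : R) :
  (1 <= a <= b)%nat -> distZ (INR b * x) < distZ (INR a * x) ->
  1 < 2 * INR b * distZ (INR a * x).
Proof.
  intros Hab Hlt.
  destruct (distZ_Rabs (INR a * x)) as [pa Ea].
  destruct (distZ_Rabs (INR b * x)) as [pb Eb].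
  rewrite Ea, Eb in *.
  apply (integer_combination_gap (INR a) _ _ (INR b * x - IZR pb) (Z.of_nat b * pa - Z.of_nat a * pb)).
  - split; [apply lt_0_INR | apply le_INR]; lia.
  - exact Hlt.
  - rewrite minus_IZR, !mult_IZR, <- !INR_IZR_INZ. ring.
Qed.

(* [min_dist x n] is min_{1 <= m <= max 1 n} ||m x||; the value at 0 is irrelevant. *)
Fixpoint min_dist (x : R) (n : nat) : R :=
  match n with
  | O => distZ x
  | S m => Rmin (min_dist x m) (distZ (INR (S m) * x))
  end.

Lemma min_dist_le x n m : (1 <= m <= n)%nat -> min_dist x n <= distZ (INR m * x).
Proof.
  induction n as [| n IH]; intros Hm; [lia |].
  simpl min_dist. destruct (Nat.eq_dec m (S n)) as [-> | Hne].
  - apply Rmin_r.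
  - eapply Rle_trans; [apply Rmin_l | apply IH; lia].
Qed.

Lemma min_dist_attained x n :
  exists a, (1 <= a <= Nat.max 1 n)%nat /\ min_dist x n = distZ (INR a * x).
Proof.
  induction n as [| n [a [Ha Ea]]].
  - exists 1%nat. simpl. rewrite Rmult_1_l. split; [lia | reflexivity].
  - simpl min_dist. apply Rmin_case.
    + exists a. split; [lia | exact Ea].
    + exists (S n). split; [lia | reflexivity].
Qed.

Lemma min_dist_ge0 x n : 0 <= min_dist x n.
Proof. destruct (min_dist_attained x n) as [a [_ ->]]. apply distZ_ge0. Qed.

Lemma min_dist_nonincreasing x : nonincreasing_pos (min_dist x).
Proof.
  intros m n _ Hmn. induction Hmn as [| n _ IH]; [lra |].
  eapply Rle_trans; [apply Rmin_l | exact IH].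
Qed.

Lemma distZ_mul_irrational_pos x m :
  ~ is_rational x -> (1 <= m)%nat -> 0 < distZ (INR m * x).
Proof.
  intros Hx Hm.
  destruct (Rle_lt_or_eq_dec 0 _ (distZ_ge0 (INR m * x))) as [Hpos | H0]; [exact Hpos |].
  exfalso. apply Hx. destruct (distZ_eq0 _ (eq_sym H0)) as [z Hz].
  exists z, (Z.of_nat m). split; [lia |].
  rewrite <- INR_IZR_INZ, <- Hz. field. apply not_0_INR. lia.
Qed.

Lemma min_dist_irrational_pos x n : ~ is_rational x -> 0 < min_dist x n.
Proof.
  intros Hx. destruct (min_dist_attained x n) as [a [Ha ->]].
  apply distZ_mul_irrational_pos; [exact Hx | lia].
Qed.

Lemma min_dist_persists x n L :
  (1 <= n <= L)%nat -> 2 * INR L * min_dist x n <= 1 -> min_dist x n <= min_dist x L.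
Proof.
  intros HnL Hsmall.
  destruct (min_dist_attained x L) as [b [Hb ->]].
  destruct (le_lt_dec b n) as [Hbn | Hnb]; [apply min_dist_le; lia |].
  destruct (min_dist_attained x n) as [a [Ha Ea]].
  destruct (Rlt_or_le (distZ (INR b * x)) (min_dist x n)) as [Hlt | Hge]; [| exact Hge].
  exfalso. rewrite Ea in Hlt, Hsmall.
  pose proof (distZ_mul_record_bound a b x ltac:(lia) Hlt).
  assert (INR b <= INR L) by (apply le_INR; lia).
  pose proof (distZ_ge0 (INR a * x)). nra.
Qed.

Definition partial_sum (psi : nat -> R) (N : nat) : R :=
  sum_f_R0 (fun k => psi (S k)) N.

Lemma partial_sum_nondecreasing psi n :
  nonneg_pos psi -> partial_sum psi n <= partial_sum psi (S n).
Proof.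
  intros Hpsi. unfold partial_sum. simpl sum_f_R0.
  pose proof (Hpsi (S (S n)) ltac:(lia)). lra.
Qed.

Lemma partial_sum_block_ge psi N d : nonincreasing_pos psi ->
  INR d * psi (N + d + 1)%nat <= partial_sum psi (N + d) - partial_sum psi N.
Proof.
  intros Hdec. induction d as [| d IH].
  - rewrite Nat.add_0_r. simpl. lra.
  - replace (N + S d)%nat with (S (N + d)) by lia.
    replace (S (N + d) + 1)%nat with (S (S (N + d))) by lia.
    rewrite S_INR. unfold partial_sum in *. simpl sum_f_R0.
    assert (Hle : psi (S (S (N + d))) <= psi (N + d + 1)%nat) by (apply Hdec; lia).
    assert (INR d * psi (S (S (N + d))) <= INR d * psi (N + d + 1)%nat)
      by (apply Rmult_le_compat_l; [apply pos_INR | exact Hle]).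
    lra.
Qed.

Lemma cv_infty_of_steps (u : nat -> R) (c : R) :
  (forall n, u n <= u (S n)) -> 0 < c ->
  (forall N, exists N', u N + c <= u N') -> cv_infty u.
Proof.
  intros Hmono Hc Hstep.
  assert (Hle : forall m n, (m <= n)%nat -> u m <= u n).
  { intros m n Hmn. induction Hmn as [| n _ IH]; [lra | eapply Rle_trans; eauto]. }
  assert (Hreach : forall k, exists N, u 0%nat + INR k * c <= u N).
  { induction k as [| k [N HN]].
    - exists 0%nat. simpl. lra.
    - destruct (Hstep N) as [N' HN']. exists N'. rewrite S_INR. lra. }
  intros M.
  destruct (INR_archimed c (M - u 0%nat) Hc) as [k Hk].
  destruct (Hreach k) as [N HN].
  exists N. intros n Hn. specialize (Hle N n Hn). lra.
Qed.

Lemma sum_diverges_pos psi n :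
  nonneg_pos psi -> nonincreasing_pos psi -> sum_diverges psi ->
  (1 <= n)%nat -> 0 < psi n.
Proof.
  intros Hpsi Hdec Hdiv Hn.
  destruct (Rlt_or_le 0 (psi n)) as [Hpos | Hzero]; [exact Hpos | exfalso].
  assert (Hstuck : forall m, (n <= m)%nat -> partial_sum psi m <= partial_sum psi n).
  { intros m Hm. induction Hm as [| m Hnm IH]; [lra |].
    unfold partial_sum in *. simpl sum_f_R0.
    assert (psi (S (S m)) <= psi n) by (apply Hdec; lia). lra. }
  destruct (Hdiv (partial_sum psi n)) as [N HN].
  specialize (HN (Nat.max N n) ltac:(lia)).
  specialize (Hstuck (Nat.max N n) ltac:(lia)).
  unfold partial_sum in *. cbv beta in HN. lra.
Qed.

Lemma nat_between r : 0 <= r -> exists L : nat, r < INR L <= r + 1.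
Proof.
  intros Hr. destruct (archimed r) as [Hup1 Hup2].
  exists (Z.to_nat (up r)).
  rewrite INR_IZR_INZ, Z2Nat.id; [lra |].
  apply le_IZR. lra.
Qed.

Lemma min_dist_partial_sum_step x N : ~ is_rational x ->
  exists N', partial_sum (min_dist x) N + 1/8 <= partial_sum (min_dist x) N'.
Proof.
  intros Hx.
  remember (S N) as n eqn:Hn_def.
  set (d := min_dist x (2 * n)).
  assert (Hd : 0 < d) by apply min_dist_irrational_pos, Hx.
  assert (Hn : 1 <= INR n) by (apply (le_INR 1); lia).
  destruct (Rlt_or_le 1 (8 * INR n * d)) as [Hbig | Hsmall].
  - exists (N + n)%nat.
    pose proof (partial_sum_block_ge (min_dist x) N n (min_dist_nonincreasing x)) as Hblock.
    replace (N + n + 1)%nat with (2 * n)%nat in Hblock by lia.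
    fold d in Hblock. lra.
  - (* d persists up to L ~ n + 1/(8d), and the L - n terms after N each exceed d *)
    set (e := / (8 * d)).
    assert (He : 8 * d * e = 1) by (unfold e; field; lra).
    assert (Hne : INR n <= e) by nra.
    destruct (nat_between (INR n + e)) as [L [HL_lo HL_hi]]; [lra |].
    assert (H2nL : (2 * n < L)%nat) by (apply INR_lt; rewrite mult_INR; simpl; lra).
    assert (Hpersist : d <= min_dist x L).
    { apply min_dist_persists; [lia |]. fold d.
      assert (INR L * d <= (INR n + e + 1) * d) by (apply Rmult_le_compat_r; lra).
      assert (d <= INR n * d) by nra.
      nra. }
    exists (L - 1)%nat.
    pose proof (partial_sum_block_ge (min_dist x) N (L - n) (min_dist_nonincreasing x)) as Hblock.
    replace (N + (L - n))%nat with (L - 1)%nat in Hblock by lia.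
    replace (L - 1 + 1)%nat with L in Hblock by lia.
    rewrite minus_INR in Hblock by lia.
    assert ((INR L - INR n) * d <= (INR L - INR n) * min_dist x L)
      by (apply Rmult_le_compat_l; lra).
    nra.
Qed.

Lemma min_dist_diverges x : ~ is_rational x -> sum_diverges (min_dist x).
Proof.
  intros Hx.
  apply (cv_infty_of_steps (partial_sum (min_dist x)) (1/8)); [| lra |].
  - intros n. apply partial_sum_nondecreasing. intros m _. apply min_dist_ge0.
  - intros N. apply min_dist_partial_sum_step, Hx.
Qed.

Lemma irrational_not_in_Pi0 x : ~ is_rational x -> ~ in_Pi0 x.
Proof.
  intros Hx HPi.
  destruct (HPi (min_dist x) (fun n _ => min_dist_ge0 x n) (min_dist_nonincreasing x)
                (min_dist_diverges x Hx) 1%nat) as [n [_ [Hn Hlt]]].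
  rewrite Rplus_0_r in Hlt.
  pose proof (min_dist_le x n n ltac:(lia)). lra.
Qed.

Lemma distZ_mul_den_multiple p q k : q <> 0%Z ->
  distZ (INR (Z.to_nat (Z.abs q) * k) * (IZR p / IZR q)) = 0.
Proof.
  intros Hq.
  replace (INR (Z.to_nat (Z.abs q) * k) * (IZR p / IZR q))
    with (IZR (Z.sgn q * p * Z.of_nat k)).
  - apply distZ_IZR.
  - rewrite INR_IZR_INZ, Nat2Z.inj_mul, Z2Nat.id, <- Z.sgn_abs by lia.
    rewrite !mult_IZR. field. apply not_0_IZR, Hq.
Qed.

Lemma rational_in_Pi0 x : is_rational x -> in_Pi0 x.
Proof.
  intros [p [q [Hq ->]]] psi Hnonneg Hdec Hdiv N.
  exists (Z.to_nat (Z.abs q) * S N)%nat.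
  split; [nia | split; [nia |]].
  rewrite Rplus_0_r, distZ_mul_den_multiple by exact Hq.
  apply sum_diverges_pos; [exact Hnonneg | exact Hdec | exact Hdiv | nia].
Qed.

Theorem lemma23 : forall x : R, in_Pi0 x <-> is_rational x.
Proof.
  intros x. split.
  - intros HPi. apply NNPP. intros Hx. exact (irrational_not_in_Pi0 x Hx HPi).
  - apply rational_in_Pi0.
Qed.
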